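(* Let $N\ge1$ be an integer, let $0<\sigma_0^2<\sigma_1^2$, and let $\alpha,\beta\in(0.5,1)$. Define $\eta_0:=\Gamma^{-1}\!\left(\tfrac N2,(1-\alpha)\Gamma(\tfrac N2)\right)\sigma_0^2$ and the Rao-test thresholds $\eta_1^R=(N-\sqrt{2N\lambda_1^R})\sigma_1^2$, $\eta_2^R=(N+\sqrt{2N\lambda_1^R})\sigma_1^2$, where $\lambda_1^R>0$ is chosen so that $$\frac{\Gamma(\frac N2,\frac{\eta_1^R}{\sigma_1^2})-\Gamma(\frac N2,\frac{\eta_2^R}{\sigma_1^2})}{\Gamma(\frac N2)}=\beta .$$ Let $\eta_1^r:=\Gamma^{-1}\!\left(\tfrac N2,(1-\alpha)\Gamma(\tfrac N2)\right)\sigma_0^2$ and $\eta_2^r:=2N\sigma_1^2-\eta_1^r$. If $$\beta>\frac{\Gamma(\frac N2,\frac{\eta_1^r}{\sigma_1^2})}{\Gamma(\frac N2)}-\frac{\Gamma(\frac N2,\frac{\eta_2^r}{\sigma_1^2})}{\Gamma(\frac N2)},$$ then the decision regions $\mathcal{R}_0=\{Y<\eta_0\}$ and $\mathcal{R}_1=\{\eta_1^R<Y<\eta_2^R\}$ overlap, i.e., $\eta_1^R<\eta_0$.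
   Context: Observations $y_0,\dots,y_{N-1}$ are i.i.d. $\mathcal{N}(0,\sigma^2)$; the test statistic is $Y=\sum_{n=0}^{N-1}y_n^2$. Hypotheses: $\mathcal{H}_0:\sigma^2=\sigma_0^2$, $\mathcal{H}_1:\sigma^2=\sigma_1^2$, $\mathcal{H}_2:\sigma^2\in(\sigma_0^2,\sigma_1^2)\cup(\sigma_1^2,\infty)$. $\Gamma(a)$ is the Gamma function, $\Gamma(a,x)=\int_x^\infty t^{a-1}e^{-t}dt$ the upper incomplete Gamma function, and $\Gamma^{-1}(a,\cdot)$ the inverse of $x\mapsto\Gamma(a,x)$. The Rao test statistic is $T_R=\frac{(Y-N\sigma_1^2)^2}{2N\sigma_1^4}$, declaring $\mathcal{H}_1$ when $T_R<\lambda_1^R$, i.e., when $\eta_1^R<Y<\eta_2^R$. The detection subproblem declares $\mathcal{H}_0$ on $\{Y<\eta_0\}$; ''overlapping'' means $\mathcal{R}_0\cap\mathcal{R}_1\ne\emptyset$, i.e., $\eta_1^R<\eta_0$. *)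

From HB Require Import structures.
From mathcomp Require Import all_boot all_order all_algebra.
From mathcomp Require Import all_classical all_reals all_analysis.
Set Implicit Arguments. Unset Strict Implicit. Unset Printing Implicit Defensive.
Import Order.TTheory GRing.Theory Num.Theory.
Local Open Scope classical_set_scope.
Local Open Scope ring_scope.

(* The integrand is taken to be supported on t > 0 (Gamma-distribution
   convention), so that Gamma(a,x) = Gamma(a) for x <= 0. *)
Definition upper_gamma {R : realType} (a x : R) : R :=
  fine (\int[@lebesgue_measure R]_(t in `](Num.max x 0)%R, +oo[)
          (powR t (a - 1) * expR (- t))%:E)%E.

Definition gamma_fun {R : realType} (a : R) : R := upper_gamma a 0.

(* Inverse of x |-> Gamma(a,x) on [0,+oo): some x >= 0 with Gamma(a,x) = y
   (unique when 0 < a and 0 < y <= Gamma(a)); default 0 otherwise. *)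
Definition upper_gamma_inv {R : realType} (a y : R) : R :=
  xget 0 [set x : R | 0 <= x /\ upper_gamma a x = y].

From HB Require Import structures.
From mathcomp Require Import all_boot all_order all_algebra.
From mathcomp Require Import all_classical all_reals all_analysis.
From mathcomp Require Import measurable_realfun lra.
Import Order.TTheory GRing.Theory Num.Theory.
Local Open Scope ring_scope.
Local Open Scope classical_set_scope.

(* Since eta1r = eta0, both sides of the hypothesis on beta are the
   probability, under H1, that Y / s1 falls in a band (x, 2N - x) symmetric
   about N: with x = eta1R / s1 this probability is beta, with x = eta0 / s1
   it is the right-hand side.  As Gamma(a, .) is nonincreasing, the band mass
   is nonincreasing in x, so beta being the larger value forces
   eta1R / s1 < eta0 / s1. *)

Section UpperGamma.
Context {R : realType} (a : R).

Let f (t : R) : \bar R := (powR t (a - 1) * expR (- t))%:E.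

Let f_ge0 (t : R) : (0 <= f t)%E.
Proof. by rewrite lee_fin mulr_ge0 ?powR_ge0 ?expR_ge0. Qed.

Let measurable_f : measurable_fun [set: R] f.
Proof.
apply/measurable_EFinP; apply: measurable_funM => //.
by apply: measurableT_comp => //; exact: measurable_expR.
Qed.

Let le_integral_tail {m m' : R} : m <= m' ->
  (\int[lebesgue_measure]_(t in `]m', +oo[) f t
   <= \int[lebesgue_measure]_(t in `]m, +oo[) f t)%E.
Proof.
move=> mm'; apply: ge0_subset_integral => //; first exact: measurable_funTS.
by move=> t /=; rewrite !in_itv /= !andbT; exact: le_lt_trans.
Qed.

Lemma gamma_fun_ge0 : 0 <= gamma_fun a.
Proof. by apply: fine_ge0; apply: integral_ge0 => t _; exact: f_ge0. Qed.

(* [gamma_fun a] is [fine] of the integral, which is 0 when the integral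
   diverges; a nonzero value therefore certifies convergence. *)
Let integral_tail_fin_num (m : R) : gamma_fun a != 0 -> 0 <= m ->
  (\int[lebesgue_measure]_(t in `]m, +oo[) f t)%E \is a fin_num.
Proof.
rewrite /gamma_fun /upper_gamma maxxx -/f => G0 m0.
rewrite ge0_fin_numE; last by apply: integral_ge0 => t _; exact: f_ge0.
apply: le_lt_trans (le_integral_tail m0) _.
have : (0 <= \int[lebesgue_measure]_(t in `]0%R, +oo[) f t)%E.
  by apply: integral_ge0 => t _; exact: f_ge0.
move: G0.
by case: (\int[lebesgue_measure]_(t in `]0%R, +oo[) f t)%E => //= [r|]; rewrite ?ltry ?eqxx.
Qed.

Lemma le_upper_gamma (x y : R) : gamma_fun a != 0 -> x <= y ->
  upper_gamma a y <= upper_gamma a x.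
Proof.
move=> G0 xy; rewrite /upper_gamma -/f.
apply: fine_le; try by apply: integral_tail_fin_num; rewrite // le_max lexx orbT.
by apply: le_integral_tail; rewrite ge_max !le_max xy lexx /= orbT.
Qed.

Definition symmetric_band_mass (c x : R) : R :=
  (upper_gamma a x - upper_gamma a (2 * c - x)) / gamma_fun a.

Lemma symmetric_band_mass_nonincreasing (c u x : R) : gamma_fun a != 0 ->
  u <= x -> symmetric_band_mass c x <= symmetric_band_mass c u.
Proof.
move=> G0 ux; rewrite /symmetric_band_mass ler_wpM2r ?invr_ge0 ?gamma_fun_ge0 //.
by apply: lerB; apply: le_upper_gamma; rewrite ?lerB.
Qed.

End UpperGamma.

Theorem theorem2 (R : realType) (N : nat) (s0 s1 alpha beta lamR : R) :
  (1 <= N)%N ->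
  0 < s0 -> s0 < s1 ->
  1/2 < alpha < 1 -> 1/2 < beta < 1 ->
  let a := N%:R / 2 in
  let eta0 := upper_gamma_inv a ((1 - alpha) * gamma_fun a) * s0 in
  let eta1R := (N%:R - Num.sqrt (2 * N%:R * lamR)) * s1 in
  let eta2R := (N%:R + Num.sqrt (2 * N%:R * lamR)) * s1 in
  0 < lamR ->
  (upper_gamma a (eta1R / s1) - upper_gamma a (eta2R / s1)) / gamma_fun a = beta ->
  let eta1r := upper_gamma_inv a ((1 - alpha) * gamma_fun a) * s0 in
  let eta2r := 2 * N%:R * s1 - eta1r in
  beta > upper_gamma a (eta1r / s1) / gamma_fun a
         - upper_gamma a (eta2r / s1) / gamma_fun a ->
  eta1R < eta0.
Proof.
move=> _ s0_gt0 s01 _ /andP[beta_gt _] a eta0 eta1R eta2R _ hbeta eta1r eta2r.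
have s1_gt0 : 0 < s1 by apply: lt_trans s01.
have G0 : gamma_fun a != 0.
  by apply: contraTneq beta_gt => G0; rewrite -hbeta G0 invr0 mulr0; lra.
have beta_mass : beta = symmetric_band_mass a N%:R (eta1R / s1).
  rewrite -hbeta /symmetric_band_mass /eta2R /eta1R !mulfK ?gt_eqF //.
  by congr ((_ - upper_gamma a _) / _); lra.
have -> : eta2r / s1 = 2 * N%:R - eta0 / s1 by rewrite /eta2r mulrBl mulfK ?gt_eqF.
rewrite -mulrBl -/(symmetric_band_mass a N%:R (eta0 / s1)) beta_mass.
apply: contraTlt => le_eta.
rewrite -leNgt; apply: symmetric_band_mass_nonincreasing => //.
by rewrite ler_pM2r ?invr_gt0.
Qed.
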